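(* Consider the DRV process with choice function $k(n)\to\infty$. Then $\mathbb{E}[D_0(\lfloor n/2\rfloor)] = O\!\left(\frac{n}{k(n)}\right)$, where $D_0(t)$ denotes the number of vertices of degree $0$ after $t$ edges have been added.
   Context: The DRV process (Degree Rule with Varying Choice): fix a function $k=k(n)$ with $2\le k(n)\le n$. Start at time $t=0$ with $n$ isolated vertices and no edges. At each time step $t=0,1,2,\dots$ (one edge is added per step, so after $t$ steps the graph has $t$ edges; multiple edges are allowed), independently of the past choose a set $V_t$ of $k(n)$ distinct vertices uniformly at random, and let $V_{t,d}$ be the set of vertices in $V_t$ whose current degree is $d$. If $|V_{t,0}|\ge 2$, add an edge between two vertices of $V_{t,0}$ sampled uniformly at random without replacement; otherwise, if $|V_{t,1}|\ge 2$, add an edge between two vertices of $V_{t,1}$ sampled uniformly at random without replacement; otherwise add an edge between two vertices of $V_t$ sampled uniformly at random without replacement. $D_i(t)$ is the number of vertices of degree $i$ after $t$ steps. *)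

From HB Require Import structures.
From mathcomp Require Import all_boot all_order all_algebra.
Set Implicit Arguments. Unset Strict Implicit. Unset Printing Implicit Defensive.
Import Order.TTheory GRing.Theory Num.Theory.
Local Open Scope ring_scope.

(* A state of the process: the degree of every vertex of 'I_n.  The evolution
   of the process (and D_0) depends only on the degree sequence. *)
Definition degseq (n : nat) := {ffun 'I_n -> nat}.

Definition empty_graph (n : nat) : degseq n := [ffun => 0%N].

Definition add_edge n (s : degseq n) (u v : 'I_n) : degseq n :=
  [ffun i => (s i + (i == u) + (i == v))%N].

Definition drv_choice_set n (s : degseq n) (V : {set 'I_n}) : {set 'I_n} :=
  let V0 := [set i in V | s i == 0%N] in
  let V1 := [set i in V | s i == 1%N] in
  if (1 < #|V0|)%N then V0 else if (1 < #|V1|)%N then V1 else V.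

(* drv_exp n k t f s = E[ f(state after t more steps) | current state s ],
   where a step: V uniform among k-subsets of 'I_n; then an ordered pair (u,v)
   of distinct elements of the chosen set S uniform (equivalently an unordered
   pair sampled without replacement); add edge uv. *)
Fixpoint drv_exp (n k t : nat) (f : degseq n -> rat) (s : degseq n) : rat :=
  match t with
  | O => f s
  | t'.+1 =>
      (\sum_(V : {set 'I_n} | #|V| == k)
         let S := drv_choice_set s V in
         (\sum_(u in S) \sum_(v in S | v != u) drv_exp k t' f (add_edge s u v))
           / (#|S| * (#|S| - 1))%:R)
      / ('C(n, k))%:R
  end.

Definition D0 n (s : degseq n) : rat := (#|[set i | s i == 0%N]|)%:R.

Definition ED0 (n k t : nat) : rat := drv_exp k t (@D0 n) (empty_graph n).

From HB Require Import structures.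
From mathcomp Require Import all_boot all_order all_algebra.
From mathcomp Require Import zify ring lra.
Import Order.TTheory GRing.Theory Num.Theory.
Set Implicit Arguments. Unset Strict Implicit. Unset Printing Implicit Defensive.

(* Let m be the number of isolated vertices.  A step lowers m by 2 unless the
   sampled k-set contains at most one isolated vertex, and counting such k-sets
   bounds the probability p of that event by 8 u^2 / ((m - 2) (m - 3)), where
   u = n / (k - 2).  So E[D_0(t)] stays below the potential max(a, m - 2t) + 2 W(m),
   where a = 4u + 3 and W(m) = 16 u^2 (1/(a-3) - 1/(m-2)) for m > a, W(m) = 0
   otherwise: a stalled step costs at most 2 in the first term, and the
   telescoping increments W(m) - W(m - 2) >= 16 u^2 / ((m - 2) (m - 3)) >= 2 p
   pay for it.
   Starting from m = n, at t = n/2 the potential is at most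
   a + 2 (16 u^2) / (a - 3) = 12 u + 3 = O(n/k). *)

Definition sparse_draws n k (Z : {set 'I_n}) : {set {set 'I_n}} :=
  [set V : {set 'I_n} | (#|V| == k) && (#|V :&: Z| <= 1)].

Lemma card_sparse_draws n k (Z : {set 'I_n}) :
  #|sparse_draws k Z| <= 'C(#|~: Z|, k) + #|Z| * 'C(#|~: Z|, k.-1).
Proof.
set avoid := [set A : {set 'I_n} | A \subset ~: Z & #|A| == k].
set hit1 := [set A : {set 'I_n} | A \subset ~: Z & #|A| == k.-1].
have sub : sparse_draws k Z \subset avoid :|: [set z |: A | z in Z, A in hit1].
  apply/subsetP => V; rewrite !inE => /andP[/eqP cardV].
  rewrite leq_eqVlt ltnS leqn0 cards_eq0 => /orP[/cards1P[z VZ]| /eqP VZ0].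
    have /setIP[zV zZ] : z \in V :&: Z by rewrite VZ set11.
    apply/orP; right; apply/imset2P; exists z (V :\ z); rewrite ?setD1K //.
    rewrite inE -disjoints_subset -setI_eq0 setDE setIAC VZ -setDE setDv eqxx /=.
    by rewrite -setDE -cardV (cardsD1 z V) zV.
  by rewrite cardV eqxx -disjoints_subset -setI_eq0 VZ0 eqxx.
apply: leq_trans (subset_leq_card sub) _; apply: leq_trans (leq_card_setU _ _) _.
apply: leq_add; first by rewrite cards_draws.
rewrite curry_imset2X; apply: leq_trans (leq_imset_card _ _) _.
by rewrite cardsX cards_draws.
Qed.

Lemma mul_binSS_le r j : 'C(r, j.+2) * (j.+2 * j.+1) <= r * r * 'C(r, j).
Proof.
rewrite mulnA [_ * j.+2]mulnC mul_bin_left -mulnA [_ * j.+1]mulnC mul_bin_left.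
by rewrite mulnA leq_mul // leq_mul // leq_subr.
Qed.
Lemma ffact_mul_bin_le m r k i : i <= k ->
  m ^_ i * ('C(r, (k - i).+2) * ((k - i).+2 * (k - i).+1))
    <= i`! * (r * r) * 'C(m + r, k).
Proof.
move=> le_ik; rewrite -bin_ffact [_ * i`!]mulnC -mulnA -[X in _ <= X]mulnA.
rewrite leq_mul2l; apply/orP; right.
apply: leq_trans (leq_mul (leqnn _) (mul_binSS_le r (k - i))) _.
rewrite mulnCA leq_mul2l; apply/orP; right.
rewrite -binomial.Vandermonde (bigD1 (Ordinal (le_ik : i < k.+1))) //=.
exact: leq_addr.
Qed.
Lemma sparse_binomial_bound n m k : m <= n -> 3 <= k ->
  ('C(n - m, k) + m * 'C(n - m, k.-1)) * ((k - 2) * (k - 2) * ((m - 2) * (m - 3)))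
    <= 8 * (n * n) * 'C(n, k).
Proof.
move=> le_mn; case: k => [|[|[|j]]] // _ /=.
set r := n - m; have nE : n = m + r by rewrite /r subnKC.
have rr : r * r <= n * n by rewrite leq_mul ?leq_subr.
have e2 : j.+3 - 2 = j.+1 by lia.
have e3 : j.+3 - 3 = j by lia.
have T2 := @ffact_mul_bin_le m r j.+3 2 isT.
have T3 := @ffact_mul_bin_le m r j.+3 3 isT.
rewrite -nE e2 e3 !ffactnS !ffactn0 !muln1 /= in T2 T3; rewrite e2.
have P2 : j.+1 * j.+1 * ((m - 2) * (m - 3)) <= m * m.-1 * (j.+3 * j.+2).
  by rewrite [X in _ <= X]mulnC; apply: leq_mul; apply: leq_mul; lia.
have P3 : m * (j.+1 * j.+1 * ((m - 2) * (m - 3))) <= m * (m.-1 * m.-2) * (j.+2 * j.+1).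
  rewrite -[X in _ <= X]mulnA leq_mul2l [X in _ <= X]mulnC; apply/orP; right.
  by apply: leq_mul; apply: leq_mul; lia.
have F2 : 'C(r, j.+3) * (j.+1 * j.+1 * ((m - 2) * (m - 3)))
            <= 2 * (n * n) * 'C(n, j.+3).
  apply: leq_trans (leq_mul (leq_mul (leqnn 2) rr) (leqnn _)); apply: leq_trans T2.
  by rewrite [X in _ <= X]mulnCA leq_mul2l P2 orbT.
have F3 : m * 'C(r, j.+2) * (j.+1 * j.+1 * ((m - 2) * (m - 3)))
            <= 6 * (n * n) * 'C(n, j.+3).
  apply: leq_trans (leq_mul (leq_mul (leqnn 6) rr) (leqnn _)); apply: leq_trans T3.
  by rewrite -mulnA mulnCA [X in _ <= X]mulnCA leq_mul2l P3 orbT.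
by rewrite mulnDl; apply: leq_trans (leq_add F2 F3) _; rewrite -!mulnDl.
Qed.

Local Open Scope ring_scope.

Lemma lef_pV2W (F : numFieldType) (x y : F) : 0 < x -> x <= y -> y^-1 <= x^-1.
Proof. by move=> x_gt0 le_xy; rewrite lef_pV2 ?posrE // (lt_le_trans x_gt0). Qed.

Definition reserve (a D : rat) (x : nat) : rat :=
  if x%:R <= a then 0 else D * ((a - 3)^-1 - (x%:R - 2)^-1).

Definition potential (a D : rat) (t x : nat) : rat :=
  Num.max a (x%:R - 2 * t%:R) + 2 * reserve a D x.

Lemma reserve_ge0 a D x : 3 < a -> 0 <= D -> 0 <= reserve a D x.
Proof.
move=> a_gt3 D_ge0; rewrite /reserve; case: ifP => // /negbT; rewrite -ltNge => ax.
by rewrite mulr_ge0 // subr_ge0; apply: lef_pV2W; lra.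
Qed.

Lemma reserve_le a D x : 3 < a -> 0 <= D -> reserve a D x <= D / (a - 3).
Proof.
move=> a_gt3 D_ge0; rewrite /reserve; case: ifP => [_|/negbT].
  by rewrite divr_ge0 //; lra.
rewrite -ltNge => ax; rewrite ler_wpM2l // lerBlDr lerDl invr_ge0; lra.
Qed.

Lemma reserve_homo a D : 3 < a -> 0 <= D ->
  {homo reserve a D : x y / (x <= y)%N >-> x <= y}.
Proof.
move=> a_gt3 D_ge0 x y le_xy; have le_xyR : x%:R <= y%:R :> rat by rewrite ler_nat.
rewrite {1}/reserve; case: ifP => [_|/negbT]; first exact: reserve_ge0.
rewrite -ltNge => ax; rewrite /reserve ifF; last by apply/negbTE; rewrite -ltNge; lra.
by rewrite ler_wpM2l // lerB //; apply: lef_pV2W; lra.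
Qed.

Lemma reserve_increment a D m : 3 < a -> 0 <= D -> a < m%:R ->
  reserve a D (m - 2) + D * ((m%:R - 2) * (m%:R - 3))^-1 <= reserve a D m.
Proof.
move=> a_gt3 D_ge0 am; have m2 : (2 <= m)%N by rewrite -(ler_nat rat); lra.
have -> : ((m%:R - 2) * (m%:R - 3))^-1 = (m%:R - 3)^-1 - (m%:R - 2)^-1 :> rat.
  by field; apply/andP; split; apply/eqP; lra.
have m_gt : (m%:R <= a) = false by apply/negbTE; rewrite -ltNge.
rewrite /reserve m_gt natrB //.
case: ifP => [_|/negbT]; rewrite ?add0r.
  by rewrite ler_wpM2l // lerB //; apply: lef_pV2W; lra.
rewrite -ltNge => am2; rewrite -mulrDr ler_wpM2l //.
have -> : (a - 3)^-1 - (m%:R - 2 - 2)^-1 + ((m%:R - 3)^-1 - (m%:R - 2)^-1) =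
   (a - 3)^-1 - (m%:R - 2)^-1 + ((m%:R - 3)^-1 - (m%:R - 2 - 2)^-1) by ring.
by rewrite gerDl subr_le0; apply: lef_pV2W; lra.
Qed.

Lemma potential_ge0 a D t x : 3 < a -> 0 <= D -> 0 <= potential a D t x.
Proof.
move=> a_gt3 D_ge0; rewrite addr_ge0 ?mulr_ge0 ?reserve_ge0 //.
by rewrite le_max; apply/orP; left; lra.
Qed.

Lemma potential_homo a D t : 3 < a -> 0 <= D ->
  {homo potential a D t : x y / (x <= y)%N >-> x <= y}.
Proof.
move=> a_gt3 D_ge0 x y le_xy; rewrite lerD ?ler_pM2l ?reserve_homo ?ltr0n //.
by rewrite le_max2 // lerD2r ler_nat.
Qed.

Lemma potential0 a D x : 3 < a -> 0 <= D -> x%:R <= potential a D 0 x.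
Proof.
move=> a_gt3 D_ge0; rewrite /potential mulr0 subr0.
have := reserve_ge0 x a_gt3 D_ge0.
have : x%:R <= Num.max a x%:R by rewrite le_max lexx orbT.
lra.
Qed.

Lemma potential_small a D t x : 3 < a -> x%:R <= a -> potential a D t x = a.
Proof.
move=> a_gt3 xa; rewrite /potential /reserve xa mulr0 addr0 max_l //.
have : 0 <= t%:R :> rat by rewrite ler0n.
lra.
Qed.

Lemma potential_step a D t m p : 3 < a -> 0 <= D -> a < m%:R -> 0 <= p -> p <= 1/2 ->
  2 * p <= D * ((m%:R - 2) * (m%:R - 3))^-1 ->
  potential a D t (m - 2) + p * (potential a D t m - potential a D t (m - 2))
    <= potential a D t.+1 m.
Proof.
move=> a_gt3 D_ge0 am p_ge0 p_le_half p_small.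
have m2 : (2 <= m)%N by rewrite -(ler_nat rat); lra.
have gap := reserve_increment a_gt3 D_ge0 am.
set W2 := reserve a D (m - 2) in gap *; set Wm := reserve a D m in gap *.
set M := Num.max a (m%:R - 2 - 2 * t%:R).
have -> : potential a D t (m - 2) = M + 2 * W2 by rewrite /potential natrB.
have -> : potential a D t.+1 m = M + 2 * Wm.
  by rewrite /potential /M -[t.+1%:R](natr1 t); congr (Num.max _ _ + _); ring.
have stalled : potential a D t m <= M + 2 + 2 * Wm.
  rewrite /potential lerD2r /M ge_max; apply/andP; split.
    by rewrite -addrA ler_wpDr // le_max lexx.
  by rewrite -lerBlDr le_max; apply/orP; right; lra.
have : p * (potential a D t m - (M + 2 * W2)) <= p * (2 + 2 * (Wm - W2)).
  by rewrite ler_wpM2l //; lra.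
set d := D * _ in p_small gap.
have : 0 <= (1/2 - p) * (Wm - W2) by apply: mulr_ge0; lra.
nra.
Qed.

Definition isolated n (s : degseq n) : {set 'I_n} := [set i | s i == 0%N].

Definition sparse_prob n k (s : degseq n) : rat :=
  #|sparse_draws k (isolated s)|%:R / 'C(n, k)%:R.

Definition pair_mean n (S : {set 'I_n}) (F : 'I_n -> 'I_n -> rat) : rat :=
  (\sum_(u in S) \sum_(v in S | v != u) F u v) / (#|S| * (#|S| - 1))%:R.

Lemma drv_expS n k t f (s : degseq n) :
  drv_exp k t.+1 f s =
    (\sum_(V : {set 'I_n} | #|V| == k)
       pair_mean (drv_choice_set s V) (fun u v => drv_exp k t f (add_edge s u v)))
    / 'C(n, k)%:R.
Proof. by []. Qed.

Lemma isolated_add_edge_sub n (s : degseq n) u v :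
  isolated (add_edge s u v) \subset isolated s.
Proof.
by apply/subsetP => i; rewrite !inE ffunE !addn_eq0 => /andP[/andP[-> _] _].
Qed.

Lemma isolated_add_edge n (s : degseq n) u v : u \in isolated s -> v \in isolated s ->
  isolated (add_edge s u v) = isolated s :\ u :\ v.
Proof.
rewrite !inE => /eqP su /eqP sv; apply/setP => i; rewrite !inE ffunE !addn_eq0 !eqb0.
by rewrite andbC [_ && (s i == 0%N)]andbC andbA.
Qed.

(* An empty or singleton [S] gives [pair_mean S F = 0], whence [0 <= B]. *)
Lemma pair_mean_le n (S : {set 'I_n}) F (B : rat) : 0 <= B ->
  (forall u v, u \in S -> v \in S -> v != u -> F u v <= B) -> pair_mean S F <= B.
Proof.
move=> B_ge0 le_FB; rewrite /pair_mean.
have [->|S_pairs] := eqVneq (#|S| * (#|S| - 1))%N 0%N; first by rewrite invr0 mulr0.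
rewrite ler_pdivrMr ?ltr0n ?lt0n //.
have row u : u \in S -> \sum_(v in S | v != u) F u v <= B *+ (#|S| - 1).
  move=> uS; rewrite (cardsD1 u S) uS add1n subn1 /= -sumr_const.
  rewrite (eq_bigl (fun v => v \in S :\ u)) => [|v]; last by rewrite !inE andbC.
  by apply: ler_sum => v; rewrite !inE => /andP[vu vS]; apply: le_FB.
apply: le_trans (ler_sum _ row) _.
by rewrite sumr_const -mulrnA mulr_natr mulnC.
Qed.

Section OneStep.
Variables (n k t : nat) (f : degseq n -> rat) (g : nat -> rat).
Hypotheses (g_ge0 : forall x, 0 <= g x)
  (g_homo : {homo g : x y / (x <= y)%N >-> x <= y})
  (exp_le_g : forall s, drv_exp k t f s <= g #|isolated s|).

Lemma pair_mean_choice_le (s : degseq n) (V : {set 'I_n}) :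
  pair_mean (drv_choice_set s V) (fun u v => drv_exp k t f (add_edge s u v))
    <= if (#|V :&: isolated s| <= 1)%N then g #|isolated s| else g (#|isolated s| - 2).
Proof.
rewrite /drv_choice_set /=.
have -> : [set i in V | s i == 0%N] = V :&: isolated s by apply/setP => i; rewrite !inE.
case: leqP => [_|many_isolated] /=; last first.
  apply: pair_mean_le => // u v; rewrite !inE => /andP[_ su] /andP[_ sv] vu.
  apply: le_trans (exp_le_g _) _; rewrite isolated_add_edge ?inE //.
  rewrite [#|isolated s|](cardsD1 u) [#|isolated s :\ u|](cardsD1 v) !inE su sv vu /=.
  by rewrite add1n add1n subn2.
apply: pair_mean_le => // u v _ _ _; apply: le_trans (exp_le_g _) _.
exact/g_homo/subset_leq_card/isolated_add_edge_sub.
Qed.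

Lemma drv_exp_step (s : degseq n) : (k <= n)%N ->
  drv_exp k t.+1 f s <= g (#|isolated s| - 2)
    + sparse_prob k s * (g #|isolated s| - g (#|isolated s| - 2)).
Proof.
move=> le_kn; rewrite drv_expS /sparse_prob.
have C_gt0 : 0 < 'C(n, k)%:R :> rat by rewrite ltr0n bin_gt0.
rewrite ler_pdivrMr // mulrDl mulrAC divfK ?lt0r_neq0 //.
apply: le_trans (ler_sum _ (fun V _ => pair_mean_choice_le s V)) _.
set gm := g #|isolated s|; set g2 := g (#|isolated s| - 2).
rewrite (eq_bigr (fun V => g2 + (if (#|V :&: isolated s| <= 1)%N then gm - g2 else 0))).
  rewrite big_split /= sumr_const -big_mkcondr /= sumr_const.
  have -> : #|(fun V : {set 'I_n} => #|V| == k)| = 'C(n, k).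
    by rewrite -cardsE card_draws card_ord.
  by rewrite /sparse_draws cardsE mulr_natr mulr_natl.
by move=> V _; case: ifP => _; rewrite ?addr0 // addrC subrK.
Qed.
End OneStep.

Lemma drv_exp_le_potential n k a D t (s : degseq n) : (k <= n)%N -> 3 < a -> 0 <= D ->
  (forall s : degseq n, a < #|isolated s|%:R ->
     sparse_prob k s <= 1/2 /\
     2 * sparse_prob k s <= D * ((#|isolated s|%:R - 2) * (#|isolated s|%:R - 3))^-1) ->
  drv_exp k t (@D0 n) s <= potential a D t #|isolated s|.
Proof.
move=> le_kn a_gt3 D_ge0 sparse_small; elim: t s => [|t IH] s; first exact: potential0.
apply: le_trans (drv_exp_step _ _ IH s le_kn) _.
- by move=> x; apply: potential_ge0.
- exact: potential_homo.
have p_ge0 : 0 <= sparse_prob k s by rewrite divr_ge0 ?ler0n.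
case: (lerP #|isolated s|%:R a) => [few | many]; last first.
  by have [] := sparse_small s many; apply: potential_step.
have few2 : (#|isolated s| - 2)%:R <= a by apply: le_trans few; rewrite ler_nat leq_subr.
by rewrite !potential_small // subrr mulr0 addr0.
Qed.

Lemma sparse_prob_le n k (s : degseq n) : (3 <= k)%N -> (3 <= #|isolated s|)%N ->
  sparse_prob k s * ((k%:R - 2) ^+ 2 * ((#|isolated s|%:R - 2) * (#|isolated s|%:R - 3)))
    <= 8 * n%:R ^+ 2.
Proof.
set m := #|isolated s| => k_ge3 m_ge3.
have le_mn : (m <= n)%N by rewrite -[n in (_ <= n)%N](card_ord n) max_card.
have cardC : #|~: isolated s| = (n - m)%N by rewrite cardsCs setCK card_ord.
have := card_sparse_draws k (isolated s); rewrite cardC => card_sparse.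
have := leq_trans (leq_mul card_sparse (leqnn _)) (sparse_binomial_bound le_mn k_ge3).
rewrite -(ler_nat rat) !natrM !natrB ?(leq_trans _ k_ge3) ?(leq_trans _ m_ge3) //.
rewrite /sparse_prob; case: (posnP 'C(n, k)) => [-> _|C_gt0].
  by rewrite invr0 mulr0 mul0r mulr_ge0 ?exprn_ge0 ?ler0n.
by move=> bound; rewrite mulrAC ler_pdivrMr ?ltr0n // !expr2.
Qed.

Lemma sparse_prob_small n k (s : degseq n) (u : rat) : (3 <= k)%N -> 0 < u ->
  u * (k%:R - 2) = n%:R -> 4 * u + 3 < #|isolated s|%:R ->
  sparse_prob k s <= 1/2 /\
  2 * sparse_prob k s <= 16 * u ^+ 2 * ((#|isolated s|%:R - 2) * (#|isolated s|%:R - 3))^-1.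
Proof.
set m := #|isolated s| => k_ge3 u_gt0 u_def many.
have m_ge3 : (3 <= m)%N by rewrite -(ler_nat rat); lra.
have k2_gt0 : 0 < (k%:R - 2) ^+ 2 :> rat.
  by rewrite exprn_gt0 // subr_gt0 (ltr_nat rat 2).
have := @sparse_prob_le _ k s k_ge3 m_ge3; rewrite -u_def exprMn.
set p := sparse_prob k s; set X := (_ - 2) * (_ - 3).
move=> bound; have pX : p * X <= 8 * u ^+ 2 by rewrite -(ler_pM2r k2_gt0); lra.
have p_ge0 : 0 <= p by rewrite divr_ge0 ?ler0n.
have X_large : 16 * u ^+ 2 < X.
  have : (4 * u) ^+ 2 < (m%:R - 3) ^+ 2 by rewrite ltrXn2r // ?ltW //; lra.
  rewrite /X expr2 [_ ^+ 2]expr2; nra.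
have X_gt0 : 0 < X by have := exprn_ge0 2 (ltW u_gt0); lra.
split; first by rewrite -(ler_pM2r X_gt0); lra.
by rewrite ler_pdivlMr //; lra.
Qed.

Lemma card_isolated_empty n : #|isolated (empty_graph n)| = n.
Proof.
by rewrite -[RHS](card_ord n) -cardsT; apply/eq_card => i; rewrite !inE ffunE.
Qed.

Theorem ED0_half_le n k : (4 <= k <= n)%N -> ED0 n k (n %/ 2) <= 27 * (n%:R / k%:R).
Proof.
case/andP=> k_ge4 le_kn.
have k_ge4R : 4 <= k%:R :> rat by rewrite (ler_nat rat 4).
have le_knR : k%:R <= n%:R :> rat by rewrite ler_nat.
pose u : rat := n%:R / (k%:R - 2).
have u_def : u * (k%:R - 2) = n%:R by rewrite divfK //; apply/eqP; lra.
have u_gt0 : 0 < u by rewrite divr_gt0 //; lra.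
have a_gt3 : 3 < 4 * u + 3 by lra.
have D_ge0 : 0 <= 16 * u ^+ 2 by rewrite mulr_ge0 ?exprn_ge0 // ltW.
have := drv_exp_le_potential (n %/ 2) (empty_graph n) le_kn a_gt3 D_ge0
  (fun s => @sparse_prob_small _ k s u (ltnW k_ge4) u_gt0 u_def).
rewrite /ED0 card_isolated_empty /potential => /le_trans; apply.
have odd_part : n%:R - 2 * (n %/ 2)%:R <= 1 :> rat.
  by rewrite -natrM lerBlDl natr1 ler_nat; lia.
have := reserve_le n a_gt3 D_ge0.
have -> : 16 * u ^+ 2 / (4 * u + 3 - 3) = 4 * u by field; lra.
set v := n%:R / k%:R; have v_def : v * k%:R = n%:R by rewrite divfK //; apply/eqP; lra.
have u_le : u <= 2 * v.
  by rewrite -(ler_pM2r (_ : 0 < k%:R)); [nra | lra].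
have v_ge1 : 1 <= v by rewrite -(ler_pM2r (_ : 0 < k%:R)); lra.
rewrite max_l; lra.
Qed.

Theorem proposition1 (k : nat -> nat)
  (hk : forall n : nat, (2 <= n)%N -> (2 <= k n <= n)%N)
  (hinf : forall M : nat, exists N : nat, forall n : nat, (N <= n)%N -> (M <= k n)%N) :
  exists (C : rat) (N : nat), 0 < C /\
    forall n : nat, (N <= n)%N ->
      ED0 n (k n) (n %/ 2) <= C * (n%:R / (k n)%:R).
Proof.
have [N k_ge4] := hinf 4%N.
exists 27, (maxn N 2); split => // n; rewrite geq_max => /andP[/k_ge4 k_n_ge4 n_ge2].
have /andP[_ le_kn] := hk n n_ge2.
by apply: ED0_half_le; rewrite k_n_ge4 le_kn.
Qed.
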